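(* In the security-third model, for any attacker $m$, destination $d$, and AS $s$: if $s$ uses (in the stable routing state during $m$'s attack) a route to $d$ that avoids $m$ when the set of secure ASes is $S$, then $s$ uses a route to $d$ that avoids $m$ for every set of secure ASes $T\supset S$.
   Context: An AS graph is an undirected graph $G=(V,E)$ of ASes; each edge is labeled customer–provider or peer–peer. Routing is to a destination $d$; $d$ announces ''$d$'' to its neighbors; each other AS selects at most one route to $d$ among those announced by neighbors and announces it (prepended with itself) per the export policy: a route whose next hop is a customer is announced to all neighbors, otherwise only to customers. Route type is given by the relation of the next hop; length is the number of hops in the announced path. Insecure ASes rank routes by (LP) customer over peer over provider, then (SP) shorter over longer, then (TB) a fixed deterministic AS-specific tie-break. For a set of secure ASes, a route is secure iff all ASes on it are secure; in the security-third model each secure AS applies (SecP): prefer secure over insecure routes, between SP and TB. The attack: attacker $m\ne d$ (not a neighbor of $d$) announces the bogus path ''$m,d$'' via insecure BGP to all its neighbors; routes containing $m$ are insecure. A stable routing state is one in which no AS re-running its selection changes its route. *)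

From mathcomp Require Import all_boot.
Set Implicit Arguments. Unset Strict Implicit. Unset Printing Implicit Defensive.

Section BGP.
Variable V : finType.
(* AS graph: [cp u v] means "u is a customer of v" (v is a provider of u);
   [pp u v] means "u and v are peers". *)
Variables (cp pp : rel V).
(* AS-specific deterministic tie-break: AS x prefers next hop y over z
   iff tb x y < tb x z (assumed injective in x's argument, i.e. a strict
   total order on next hops). *)
Variable tb : V -> V -> nat.
Variables (d m : V).

Definition wf_graph : Prop :=
  [/\ forall u, ~~ cp u u && ~~ pp u u,
      forall u v, pp u v = pp v u,
      forall u v, ~~ (cp u v && cp v u) &
      forall u v, ~~ ((cp u v || cp v u) && pp u v)].

Definition adj (u v : V) : bool := [|| cp u v, cp v u | pp u v].

(* a route held by AS x is a path [:: x, next hop, ..., d] *)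
Definition nexthop (x : V) (r : seq V) : V := nth x r 1.

(* local preference of x for a route through neighbour y:
   customer (0) over peer (1) over provider (2) *)
Definition lp (x y : V) : nat := if cp y x then 0 else if pp x y then 1 else 2.

Definition rlen (r : seq V) : nat := (size r).-1.

Definition secure (S : {set V}) (r : seq V) : bool :=
  all (fun v => v \in S) r && (m \notin r).

(* SecP only applies at secure ASes *)
Definition secbit (S : {set V}) (x : V) (r : seq V) : nat :=
  if (x \in S) && secure S r then 0 else 1.

(* [better S x r1 r2] : AS x strictly prefers r1 over r2
   (LP, then SP, then SecP (secure ASes only), then TB) *)
Definition better (S : {set V}) (x : V) (r1 r2 : seq V) : bool :=
  let l1 := lp x (nexthop x r1) in let l2 := lp x (nexthop x r2) in
  let n1 := rlen r1 in let n2 := rlen r2 in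
  let s1 := secbit S x r1 in let s2 := secbit S x r2 in
  let t1 := tb x (nexthop x r1) in let t2 := tb x (nexthop x r2) in
  (l1 < l2) || ((l1 == l2) && ((n1 < n2) || ((n1 == n2) &&
    ((s1 < s2) || ((s1 == s2) && (t1 < t2)))))).

(* export policy: d announces "d" to all neighbours, m announces "m,d" to
   all neighbours; any other AS y announces its route p to x iff the next
   hop of p is a customer of y, or x is a customer of y *)
Definition exports (y : V) (p : seq V) (x : V) : bool :=
  [|| y == d, y == m,
      (if p is _ :: z :: _ then cp z y else false) | cp x y].

Definition state := V -> option (seq V).

Definition avail (R : state) (x : V) (r : seq V) : Prop :=
  exists y p, [/\ adj x y, R y = Some p, exports y p x, x \notin p & r = x :: p].

Definition stable (S : {set V}) (R : state) : Prop :=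
  [/\ R d = Some [:: d],
      R m = Some [:: m; d] &
      forall x, x != d -> x != m ->
        match R x with
        | None => forall r, ~ avail R x r
        | Some r => avail R x r /\ forall r', avail R x r' -> ~~ better S x r' r
        end].

End BGP.

Definition avoids (V : eqType) (m : V) (o : option (seq V)) : bool :=
  if o is Some p then m \notin p else false.

From Pilot Require Import Defs.
From mathcomp Require Import all_boot zify.
Set Implicit Arguments. Unset Strict Implicit. Unset Printing Implicit Defensive.

(* In every stable state the class (local preference, length) of the route an
   AS uses is the same, whatever the set of secure ASes: by lexicographic
   induction on the class, the next hop of an AS has a strictly smaller class,
   hence the same class in both states, and since export depends only on the
   local preference of the exported route, the AS has the same options up to
   class in both states.  So security only decides between routes of equal
   class, through SecP and the tie-break.  By induction on the route length,
   enlarging S to T keeps secure routes secure and m-free routes m-free: if the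
   T-route of s is insecure, then so are the alternative routes through the
   next hop s uses in the other state, so neither SecP nor the tie-break
   separates the two next hops in either state, and injectivity of the
   tie-break makes them equal. *)

Section StableRouting.
Variable V : finType.
Variables (cp pp : rel V) (tb : V -> V -> nat) (d m : V).
Hypothesis wf : wf_graph cp pp.

Local Notation lp := (lp cp pp).
Local Notation adj := (adj cp pp).
Local Notation exports := (exports cp d m).
Local Notation avail := (avail cp pp d m).
Local Notation stable := (stable cp pp tb d m).
Local Notation better := (better cp pp tb m).
Local Notation secure := (secure m).
Local Notation secbit := (secbit m).

Lemma cp_irrefl u : cp u u = false.
Proof. by case: wf => irr _ _ _; case/andP: (irr u) => /negbTE. Qed.

Lemma pp_irrefl u : pp u u = false.
Proof. by case: wf => irr _ _ _; case/andP: (irr u) => _ /negbTE. Qed.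

Lemma lp_le2 x y : lp x y <= 2.
Proof. by rewrite /Defs.lp; case: (cp y x); case: (pp x y). Qed.

Lemma exports_lpE y p x :
  exports y p x = [|| y == d, y == m, lp y (nexthop y p) == 0 | cp x y].
Proof.
rewrite /Defs.exports /Defs.lp /nexthop.
case: p => [|a [|z q]] /=; rewrite ?cp_irrefl ?pp_irrefl //.
by case: (cp z y) => //; case: (pp y z).
Qed.

Lemma export_lp_le w z p :
  exports z p w -> z != d -> z != m -> lp z (nexthop z p) <= lp w z.
Proof.
rewrite exports_lpE => + zd zm; rewrite (negbTE zd) (negbTE zm) /=.
case/orP=> [/eqP-> // | cwz]; case: wf => _ _ anti mixed.
have czw : cp z w = false by apply/negP => czw; move: (anti w z); rewrite cwz czw.
have pwz : pp w z = false by apply/negP => pwz; move: (mixed w z); rewrite cwz pwz.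
by rewrite /Defs.lp czw pwz lp_le2.
Qed.

Lemma avail_export (R : state V) x y p q :
  adj x y -> R y = Some q -> exports y p x ->
  lp y (nexthop y p) = lp y (nexthop y q) -> x \notin q -> avail R x (x :: q).
Proof.
by move=> axy Ry ex lpE xq; exists y, q; split=> //; rewrite exports_lpE -lpE -exports_lpE.
Qed.

Section Stable.
Variables (X : {set V}) (R : state V).
Hypothesis st : stable X R.

Lemma stable_d : R d = Some [:: d].
Proof. by case: st. Qed.

Lemma stable_m : R m = Some [:: m; d].
Proof. by case: st. Qed.

Lemma stable_best x r : x != d -> x != m -> avail R x r ->
  exists2 r', R x = Some r' & ~~ better X x r r'.
Proof.
case: st => _ _ opt xd xm av; move: (opt x xd xm).
by case: (R x) => [r'|/(_ r av)//] [_ /(_ r av)]; exists r'.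
Qed.

Lemma stable_head z p : R z = Some p -> exists p', p = z :: p'.
Proof.
case: (eqVneq z d) => [->|zd]; first by rewrite stable_d => -[<-]; exists [::].
case: (eqVneq z m) => [->|zm]; first by rewrite stable_m => -[<-]; exists [:: d].
case: st => _ _ /(_ z zd zm) + Rz; rewrite Rz => -[[y [p' [_ _ _ _ ->]]] _].
by exists p'.
Qed.

Lemma stable_route x r : x != d -> x != m -> R x = Some r ->
  exists y p, [/\ adj x y, R y = Some (y :: p), exports y (y :: p) x,
                  x \notin y :: p & r = x :: y :: p].
Proof.
case: st => _ _ /[apply] /[apply] + Rx; rewrite Rx => -[[y [q [axy Ry ex xq ->]]] _].
by have [p eq] := stable_head Ry; subst q; exists y, p.
Qed.

Lemma stable_route_dm z p x :
  R z = Some p -> x \in p -> x != d -> x != m -> (z != d) && (z != m).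
Proof.
move=> Rz xp xd xm; apply/andP; split; apply: contraTneq xp => ez; move: Rz.
  by rewrite ez stable_d => -[<-]; rewrite inE (negbTE xd).
by rewrite ez stable_m => -[<-]; rewrite !inE (negbTE xd) (negbTE xm).
Qed.

Lemma stable_on_route x : x != d -> x != m -> forall w q, R w = Some q -> x \in q ->
  exists rx, [/\ R x = Some rx, lp x (nexthop x rx) <= lp w (nexthop w q)
                 & rlen rx <= rlen q].
Proof.
move=> xd xm w q; elim: q w => [|a q IH] w Rw xq //.
have /andP[wd wm] := stable_route_dm Rw xq xd xm.
have [y [p [_ Ry ex _ [ea eq]]]] := stable_route wd wm Rw; subst a q.
case: (eqVneq x w) => [->|xw]; first by exists [:: w, y & p].
have xyp : x \in y :: p by move: xq; rewrite in_cons (negbTE xw).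
have /andP[yd ym] := stable_route_dm Ry xyp xd xm.
have [rx [Rx lp_le len_le]] := IH y Ry xyp.
exists rx; split=> //; last exact: leq_trans len_le (leqnSn _).
exact: leq_trans lp_le (export_lp_le ex yd ym).
Qed.

Lemma stable_notin_shorter x y b p : x != d -> x != m ->
  R x = Some b -> R y = Some p -> rlen p < rlen b -> x \notin p.
Proof.
move=> xd xm Rx Ry lt; apply/negP => xp.
have [rx [Rx' _ len_le]] := stable_on_route xd xm Ry xp.
by move: Rx'; rewrite Rx => -[eb]; subst rx; move: (leq_trans lt len_le); rewrite ltnn.
Qed.

End Stable.

Definition route_class x r : nat * nat := (lp x (nexthop x r), rlen r).

Definition class_of (R : state V) x : option (nat * nat) := omap (route_class x) (R x).

Definition lex_le (a b : nat * nat) := (a.1 < b.1) || (a.1 == b.1) && (a.2 <= b.2).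

Definition lex_lt (a b : nat * nat) := (a.1 < b.1) || (a.1 == b.1) && (a.2 < b.2).

Lemma lex_ind (P : nat * nat -> Prop) :
  (forall c, (forall c', lex_lt c' c -> P c') -> P c) -> forall c, P c.
Proof.
move=> IH [l n]; elim/ltn_ind: l n => l IHl; elim/ltn_ind=> n IHn.
apply: IH => -[l' n']; rewrite /lex_lt /=.
by case/orP=> [lt|/andP[/eqP-> lt]]; [apply: IHl | apply: IHn].
Qed.

Lemma lex_le_eqVlt a b : lex_le a b -> a = b \/ lex_lt a b.
Proof.
case: a b => [a1 a2] [b1 b2]; rewrite /lex_le /lex_lt /=.
case/orP=> [lt|/andP[/eqP-> ]]; first by right; rewrite lt.
by rewrite leq_eqVlt => /orP[/eqP->|lt]; [left|right; rewrite eqxx lt orbT].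
Qed.

Lemma lex_le_of a b c e : a <= c -> b <= e -> lex_le (a, b) (c, e).
Proof. rewrite /lex_le /=; lia. Qed.

Lemma lex_lt_of a b c e : a <= c -> b < e -> lex_lt (a, b) (c, e).
Proof. rewrite /lex_lt /=; lia. Qed.

Lemma not_better_lex_le Y x r r' :
  ~~ better Y x r' r -> lex_le (route_class x r) (route_class x r').
Proof. rewrite /better /lex_le /route_class /=; lia. Qed.

Lemma route_class_cons x y p q : route_class y (y :: p) = route_class y (y :: q) ->
  route_class x [:: x, y & p] = route_class x [:: x, y & q].
Proof. by rewrite /route_class /rlen /= => -[_ ->]. Qed.

Lemma class_of_eq_some (R1 R2 : state V) x r :
  class_of R1 x = class_of R2 x -> R1 x = Some r ->
  exists r2, R2 x = Some r2 /\ route_class x r = route_class x r2.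
Proof.
rewrite /class_of => + R1x; rewrite R1x.
by case: (R2 x) => [r2 /Some_inj clsE|//]; exists r2.
Qed.

Section ClassEq.
Variables (X Y : {set V}) (R1 R2 : state V).
Hypotheses (st1 : stable X R1) (st2 : stable Y R2).

Lemma class_of_dm x : (x == d) || (x == m) -> class_of R1 x = class_of R2 x.
Proof.
by case/orP=> /eqP->; rewrite /class_of ?(stable_d st1) ?(stable_d st2)
  ?(stable_m st1) ?(stable_m st2).
Qed.

Lemma class_le_next_hop x y p : x != d -> x != m -> R1 x = Some [:: x, y & p] ->
  class_of R1 y = class_of R2 y ->
  exists2 r2, R2 x = Some r2 & lex_le (route_class x r2) (route_class x [:: x, y & p]).
Proof.
move=> xd xm R1x; have [y' [p' [axy R1y ex _ [ey ep]]]] := stable_route st1 xd xm R1x.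
subst y' p'.
move/class_of_eq_some/(_ R1y) => [q2 [R2y clsE]].
have [q eq] := stable_head st2 R2y; subst q2; rewrite (route_class_cons x clsE).
case: (boolP (x \in y :: q)) => [xq|xq].
  have /andP[yd ym] := stable_route_dm st2 R2y xq xd xm.
  have [rx [R2x lp_le len_le]] := stable_on_route st2 xd xm R2y xq.
  exists rx => //; apply: lex_le_of; last exact: leq_trans len_le (leqnSn _).
  by apply: leq_trans lp_le _; case: clsE => <- _; apply: export_lp_le ex yd ym.
have lpE : lp y (nexthop y (y :: p)) = lp y (nexthop y (y :: q)) by case: clsE.
have [r2 R2x nb] := stable_best st2 xd xm (avail_export axy R2y ex lpE xq).
by exists r2 => //; apply: not_better_lex_le nb.
Qed.

Lemma class_eq_step c :
  (forall c', lex_lt c' c -> forall z,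
     class_of R1 z = Some c' \/ class_of R2 z = Some c' -> class_of R1 z = class_of R2 z) ->
  forall x, class_of R1 x = Some c -> class_of R1 x = class_of R2 x.
Proof.
move=> IH x C1x; case: (boolP ((x == d) || (x == m))) => [|]; first exact: class_of_dm.
rewrite negb_or => /andP[xd xm]; rewrite C1x; move: C1x; rewrite /class_of.
case R1x: (R1 x) => [r|] //= -[clsE].
have [y [p [_ R1y ex _ er]]] := stable_route st1 xd xm R1x; subst r.
have eq_y : class_of R1 y = class_of R2 y.
  case: (boolP ((y == d) || (y == m))) => [|]; first exact: class_of_dm.
  rewrite negb_or => /andP[yd ym].
  apply: (IH (route_class y (y :: p))); last by left; rewrite /class_of R1y.
  by rewrite -clsE; apply: lex_lt_of (export_lp_le ex yd ym) (ltnSn _).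
have [r2 R2x le] := class_le_next_hop xd xm R1x eq_y.
rewrite R2x /=; case: (lex_le_eqVlt le) => [->|lt]; first by rewrite clsE.
rewrite clsE in lt; have := IH _ lt x; rewrite /class_of R1x R2x /= clsE => -> //.
by right.
Qed.

End ClassEq.

Lemma stable_class_eq X Y (R1 R2 : state V) :
  stable X R1 -> stable Y R2 -> class_of R1 =1 class_of R2.
Proof.
move=> st1 st2.
suff eqc c z : class_of R1 z = Some c \/ class_of R2 z = Some c ->
    class_of R1 z = class_of R2 z.
  move=> z; case C1: (class_of R1 z) => [c|]; first by rewrite -C1; apply: (eqc c); left.
  by case C2: (class_of R2 z) => [c|] //; rewrite -C1 -C2; apply: (eqc c); right.
elim/lex_ind: c z => c IH z [C1z|C2z]; first exact: (class_eq_step st1 st2 IH C1z).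
apply/esym; apply: (class_eq_step st2 st1 _ C2z) => c' lt z' C'.
by apply/esym; apply: IH lt _ _; case: C'; [right|left].
Qed.

Lemma neighbour_alternative X Y (R1 R2 : state V) x y p b :
  stable X R1 -> stable Y R2 -> x != d -> x != m ->
  R1 x = Some [:: x, y & p] -> R2 x = Some b ->
  exists q, [/\ R2 y = Some (y :: q), route_class x [:: x, y & q] = route_class x b
              & ~~ better Y x [:: x, y & q] b].
Proof.
move=> st1 st2 xd xm R1x R2x; have eqc := stable_class_eq st1 st2.
have [y' [p' [axy R1y ex _ [ey ep]]]] := stable_route st1 xd xm R1x; subst y' p'.
have [q2 [R2y clsE]] := class_of_eq_some (eqc y) R1y.
have [q eq] := stable_head st2 R2y; subst q2.
have [b' [R2x' cls_x]] := class_of_eq_some (eqc x) R1x; rewrite R2x in R2x'.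
case: R2x' => eb; subst b'; rewrite (route_class_cons x clsE) in cls_x.
have xq : x \notin y :: q.
  apply: (stable_notin_shorter st2 xd xm R2x R2y).
  by case: cls_x => _ <-.
have lpE : lp y (nexthop y (y :: p)) = lp y (nexthop y (y :: q)) by case: clsE.
have [b' R2x' nb] := stable_best st2 xd xm (avail_export axy R2y ex lpE xq).
by move: R2x'; rewrite R2x => -[eb]; subst b'; exists q; split.
Qed.

Lemma secure_cons Y x p : secure Y (x :: p) = [&& x \in Y, x != m & secure Y p].
Proof.
rewrite /Defs.secure /= in_cons (eq_sym m x).
by case: (x \in Y); case: (x == m); case: (all _ p); case: (m \in p).
Qed.

Lemma secure_subset (Y Z : {set V}) r : Y \subset Z -> secure Y r -> secure Z r.
Proof.
move=> sYZ /andP[/allP inY mr]; rewrite /Defs.secure mr andbT.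
by apply/allP => v /inY; apply: (subsetP sYZ).
Qed.

Lemma secbit_cons Y x p : secbit Y x (x :: p) = if secure Y (x :: p) then 0 else 1.
Proof. by rewrite /Defs.secbit secure_cons; case: (x \in Y). Qed.

Lemma not_better_tie Y x p q : route_class x (x :: p) = route_class x (x :: q) ->
  ~~ better Y x (x :: q) (x :: p) ->
  (secure Y (x :: q) -> secure Y (x :: p)) /\
  (secure Y (x :: p) = secure Y (x :: q) ->
     tb x (nexthop x (x :: p)) <= tb x (nexthop x (x :: q))).
Proof.
case=> lpE lenE; rewrite /better lpE lenE ltnn eqxx /= !secbit_cons.
by case: (secure Y (x :: p)); case: (secure Y (x :: q)) => //= nb; split=> // _; lia.
Qed.

Section Security.
Variables (S T : {set V}) (RS RT : state V).
Hypotheses (sST : S \subset T) (tb_inj : forall x, injective (tb x)).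
Hypotheses (stS : stable S RS) (stT : stable T RT).

Definition safer (a b : seq V) : Prop :=
  (secure S a -> secure T b) /\ (m \notin a -> m \notin b).

Lemma safer_refl a : safer a a.
Proof. by split=> //; apply: secure_subset. Qed.

Lemma stable_routes_safer x a b : RS x = Some a -> RT x = Some b -> safer a b.
Proof.
move En: (rlen a) => n; elim/ltn_ind: n x a b En => n IH x a b En RSx RTx.
case: (eqVneq x d) => [exd|xd].
  by move: RSx RTx; rewrite exd (stable_d stS) (stable_d stT) => -[<-] [<-]; apply: safer_refl.
case: (eqVneq x m) => [exm|xm].
  by move: RSx RTx; rewrite exm (stable_m stS) (stable_m stT) => -[<-] [<-]; apply: safer_refl.
have [y [pa [_ RSy _ _ ea]]] := stable_route stS xd xm RSx; subst a.
have [z [pb [_ RTz _ _ eb]]] := stable_route stT xd xm RTx; subst b.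
have [qy [RTy cls_qy nbT]] := neighbour_alternative stS stT xd xm RSx RTx.
have [pz [RSz cls_pz nbS]] := neighbour_alternative stT stS xd xm RTx RSx.
have [secT tbT] := not_better_tie (esym cls_qy) nbT.
have [secS tbS] := not_better_tie (esym cls_pz) nbS.
have [safe_yS safe_ym] : safer (y :: pa) (y :: qy).
  by apply: (IH (rlen (y :: pa))) RSy RTy => //; rewrite -En.
have [safe_zS _] : safer (z :: pz) (z :: pb).
  by apply: (IH (rlen (z :: pz))) RSz RTz => //; rewrite -En /rlen /=; case: cls_pz => _ ->.
have safe_xS : secure S [:: x, y & pa] -> secure T [:: x, z & pb].
  rewrite secure_cons => /and3P[xS _ /safe_yS sec_qy]; apply: secT.
  by rewrite secure_cons (subsetP sST x xS) xm.
split=> // m_a; case sec_b: (secure T [:: x, z & pb]); first by case/andP: sec_b.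
have sec_qy : secure T [:: x, y & qy] = false by apply: contraFF secT sec_b.
have sec_pz : secure S [:: x, z & pz] = false.
  apply: contraFF sec_b; rewrite secure_cons => /and3P[xS _ /safe_zS sec_pb].
  by rewrite secure_cons (subsetP sST x xS) xm.
have sec_pa : secure S [:: x, y & pa] = false by apply: contraFF safe_xS sec_b.
have ezy : z = y.
  apply: (@tb_inj x z y); apply/eqP; rewrite eqn_leq.
  by rewrite (tbT _) ?(tbS _) ?sec_b ?sec_qy ?sec_pa ?sec_pz.
subst z; move: RTz; rewrite RTy => -[<-].
move: m_a; rewrite in_cons negb_or => /andP[mx m_ya].
by rewrite in_cons negb_or mx safe_ym.
Qed.

End Security.
End StableRouting.

Theorem theorem4 (V : finType) (cp pp : rel V) (tb : V -> V -> nat)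
    (d m s : V) (S T : {set V}) (RS RT : V -> option (seq V)) :
  wf_graph cp pp ->
  (forall x, injective (tb x)) ->
  m != d -> ~~ adj cp pp m d ->
  S \subset T ->
  stable cp pp tb d m S RS -> (forall R, stable cp pp tb d m S R -> R =1 RS) ->
  stable cp pp tb d m T RT -> (forall R, stable cp pp tb d m T R -> R =1 RT) ->
  avoids m (RS s) -> avoids m (RT s).
Proof.
move=> wf tb_inj _ _ sST stS _ stT _.
rewrite /avoids; case RSs: (RS s) => [a|] // m_a.
have [b [RTs _]] := class_of_eq_some (stable_class_eq wf stS stT s) RSs.
by rewrite RTs; apply: (proj2 (stable_routes_safer wf sST tb_inj stS stT RSs RTs)).
Qed.
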